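(* Fix $K\in\mathbb{R}$ and consider the framed curvature flow with $\theta$-velocity $$\upsilon_\theta=-\kappa\psi_2^{-1}K-(\kappa\,\partial_s\psi_3+2\,\partial_s\kappa\,\psi_3)\kappa^{-2}\psi_1-\kappa\psi_2^{-1}\psi_3^2-(\partial_s^2\kappa-\kappa\psi_3^2)\kappa^{-2}\psi_2 .$$ Then the trajectory surface $\Sigma_{\underline t}$ generated by this flow has constant Gaussian curvature equal to $K$.
   Context: $S^1=\mathbb{R}/2\pi\mathbb{Z}$; closed curves $\Gamma_t$ parametrized by $\gamma(t,\cdot):S^1\to\mathbb{R}^3$, $g=\|\partial_u\gamma\|$, $ds=g\,du$, $\partial_s=g^{-1}\partial_u$; Frenet frame $T,N,B$, curvature $\kappa$, torsion $\tau$. For an angle function $\theta$: $\nu_\theta=\cos\theta N+\sin\theta B$, $\psi_1=\kappa\cos\theta$, $\psi_2=\kappa\sin\theta$, $\psi_3=\tau+\partial_s\theta$; the formula for $\upsilon_\theta$ presupposes $\kappa>0$ and $\psi_2\neq0$. Framed curvature flow: $\partial_t\gamma=\kappa\nu_\theta$, $\partial_t\theta=\upsilon_\theta$ on $[0,\underline t)\times S^1$. Trajectory surface $\Sigma_{\underline t}=\bigcup_{t\in[0,\underline t)}\Gamma_t$, parametrized by $\gamma(t,u)$. *)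

From Stdlib Require Import Reals.
From Coquelicot Require Import Coquelicot.
Open Scope R_scope.

Definition V3 := (R * R * R)%type.
Definition v1 (v : V3) : R := fst (fst v).
Definition v2 (v : V3) : R := snd (fst v).
Definition v3 (v : V3) : R := snd v.
Definition mkV3 (a b c : R) : V3 := (a, b, c).
Definition vadd (v w : V3) : V3 := mkV3 (v1 v + v1 w) (v2 v + v2 w) (v3 v + v3 w).
Definition vscal (a : R) (v : V3) : V3 := mkV3 (a * v1 v) (a * v2 v) (a * v3 v).
Definition dot (v w : V3) : R := v1 v * v1 w + v2 v * v2 w + v3 v * v3 w.
Definition cross (v w : V3) : V3 :=
  mkV3 (v2 v * v3 w - v3 v * v2 w) (v3 v * v1 w - v1 v * v3 w) (v1 v * v2 w - v2 v * v1 w).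
Definition vnorm (v : V3) : R := sqrt (dot v v).

Definition dt (f : R -> R -> R) (t u : R) : R := Derive (fun t' => f t' u) t.
Definition du (f : R -> R -> R) (t u : R) : R := Derive (fun u' => f t u') u.
Definition Dt (X : R -> R -> V3) (t u : R) : V3 :=
  mkV3 (dt (fun a b => v1 (X a b)) t u) (dt (fun a b => v2 (X a b)) t u)
       (dt (fun a b => v3 (X a b)) t u).
Definition Du (X : R -> R -> V3) (t u : R) : V3 :=
  mkV3 (du (fun a b => v1 (X a b)) t u) (du (fun a b => v2 (X a b)) t u)
       (du (fun a b => v3 (X a b)) t u).

(** Smoothness (C^infinity) of a scalar function of (t,u) on a set D (meant open):
    all iterated partial derivatives exist and are continuous on D. *)
Fixpoint Ck (D : R -> R -> Prop) (k : nat) (f : R -> R -> R) : Prop :=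
  (forall t u, D t u -> continuity_2d_pt f t u) /\
  match k with
  | O => True
  | S k' =>
      (forall t u, D t u -> ex_derive (fun t' => f t' u) t) /\
      (forall t u, D t u -> ex_derive (fun u' => f t u') u) /\
      Ck D k' (dt f) /\ Ck D k' (du f)
  end.
Definition smooth_on (D : R -> R -> Prop) (f : R -> R -> R) : Prop := forall k, Ck D k f.
Definition smooth_on3 (D : R -> R -> Prop) (X : R -> R -> V3) : Prop :=
  smooth_on D (fun a b => v1 (X a b)) /\ smooth_on D (fun a b => v2 (X a b)) /\
  smooth_on D (fun a b => v3 (X a b)).

Section Curve.
Variable gam : R -> R -> V3.

Definition gspeed (t u : R) : R := vnorm (Du gam t u).
Definition ds (f : R -> R -> R) (t u : R) : R := du f t u / gspeed t u.
Definition Ds (X : R -> R -> V3) (t u : R) : V3 := vscal (/ gspeed t u) (Du X t u).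

Definition Tan (t u : R) : V3 := Ds gam t u.
Definition curv (t u : R) : R := vnorm (Ds Tan t u).
Definition Nor (t u : R) : V3 := vscal (/ curv t u) (Ds Tan t u).
Definition Bin (t u : R) : V3 := cross (Tan t u) (Nor t u).
Definition tors (t u : R) : R := dot (Ds Nor t u) (Bin t u).

Variable th : R -> R -> R.
Definition nu_th (t u : R) : V3 :=
  vadd (vscal (cos (th t u)) (Nor t u)) (vscal (sin (th t u)) (Bin t u)).
Definition psi1 (t u : R) : R := curv t u * cos (th t u).
Definition psi2 (t u : R) : R := curv t u * sin (th t u).
Definition psi3 (t u : R) : R := tors t u + ds th t u.

Definition upsilon (K : R) (t u : R) : R :=
  let k := curv t u in
  - (k / psi2 t u) * K
  - (k * ds psi3 t u + 2 * ds curv t u * psi3 t u) / (k ^ 2) * psi1 t u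
  - (k / psi2 t u) * (psi3 t u) ^ 2
  - (ds (ds curv) t u - k * (psi3 t u) ^ 2) / (k ^ 2) * psi2 t u.
End Curve.

Definition gauss_curv (X : R -> R -> V3) (t u : R) : R :=
  let Xt := Dt X t u in
  let Xu := Du X t u in
  let n0 := cross Xt Xu in
  let n := vscal (/ vnorm n0) n0 in
  let E := dot Xt Xt in
  let F := dot Xt Xu in
  let G := dot Xu Xu in
  let L := dot (Dt (Dt X) t u) n in
  let M := dot (Du (Dt X) t u) n in
  let N := dot (Du (Du X) t u) n in
  (L * N - M * M) / (E * G - F * F).

From Stdlib Require Import Reals Lra FunctionalExtensionality.
From Coquelicot Require Import Coquelicot.
Open Scope R_scope.

(** Along the flow the coordinate tangents of the trajectory surface are
    [d_t gam = kappa nu] and [d_u gam = g T].  They are orthogonal, so the unit normal is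
    [m = nu x T = sin th N - cos th B] and [K = (L N - M^2) / (kappa^2 g^2)].  The Frenet
    equations give [N = g^2 kappa sin th], [M = - g kappa psi3] and
    [L = - kappa (d_t th + d_t N . B)], hence [K = - sin th (d_t th + d_t N . B) - psi3^2].
    Exchanging [d_t] and [d_s] (Schwarz) gives [d_t T . B = d_s kappa sin th + kappa cos th psi3]
    and [d_t T . N = d_s kappa cos th - kappa sin th psi3]; differentiating the first in [s]
    and using [d_s B = - tau N] yields
    [kappa^2 d_t N . B = (d_s^2 kappa - kappa psi3^2) psi2
                          + (kappa d_s psi3 + 2 d_s kappa psi3) psi1].
    The prescribed [upsilon] is exactly the velocity that turns
    [- sin th (d_t th + d_t N . B) - psi3^2] into the constant [K]. *)

(** * Open sets and smooth functions of two variables *)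

Definition open_2d (D : R -> R -> Prop) : Prop := forall t u, D t u -> locally_2d D t u.

Lemma locally_2d_of_open D (P : R -> R -> Prop) t u :
  open_2d D -> (forall a b, D a b -> P a b) -> D t u -> locally_2d P t u.
Proof.
  intros HD HP H. destruct (HD t u H) as [d Hd].
  exists d. intros a b Ha Hb. exact (HP a b (Hd a b Ha Hb)).
Qed.

Lemma locally_t_of_open D (P : R -> R -> Prop) t u :
  open_2d D -> (forall a b, D a b -> P a b) -> D t u -> locally t (fun y => P y u).
Proof. intros. apply (locally_2d_1d_const_y P), (locally_2d_of_open D); assumption. Qed.

Lemma locally_u_of_open D (P : R -> R -> Prop) t u :
  open_2d D -> (forall a b, D a b -> P a b) -> D t u -> locally u (fun y => P t y).
Proof. intros. apply (locally_2d_1d_const_x P), (locally_2d_of_open D); assumption. Qed.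

Lemma open_2d_strip a b : open_2d (fun t _ => a < t < b).
Proof.
  intros t u H. assert (Hd : 0 < Rmin (t - a) (b - t)) by (apply Rmin_pos; lra).
  exists (mkposreal _ Hd). intros x y Hx _. simpl in Hx. apply Rabs_def2 in Hx.
  pose proof (Rmin_l (t - a) (b - t)). pose proof (Rmin_r (t - a) (b - t)). lra.
Qed.

Lemma open_2d_pos D f : open_2d D -> (forall t u, D t u -> continuity_2d_pt f t u) ->
  open_2d (fun t u => D t u /\ 0 < f t u).
Proof.
  intros HD Hf t u [H Hpos]. apply locally_2d_and; [exact (HD t u H)|].
  destruct (Hf t u H (mkposreal _ Hpos)) as [d Hd]. exists d. intros a b Ha Hb.
  specialize (Hd a b Ha Hb). simpl in Hd. apply Rabs_def2 in Hd. lra.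
Qed.

Lemma Ck_pred D k f : Ck D (S k) f -> Ck D k f.
Proof.
  revert f; induction k as [|k IH]; intros f Hf.
  - split; [apply Hf | exact I].
  - destruct Hf as [Hc [Ht [Hu [Hdt Hdu]]]]. repeat split; auto.
Qed.

Lemma Ck_subset D D' k f : (forall t u, D' t u -> D t u) -> Ck D k f -> Ck D' k f.
Proof.
  intros HS; revert f; induction k as [|k IH]; intros f Hf.
  - split; [intros; apply Hf; auto | exact I].
  - destruct Hf as [Hc [Ht [Hu [Hdt Hdu]]]]. repeat split; auto.
Qed.

Lemma Ck_const D k c : Ck D k (fun _ _ => c).
Proof.
  revert c; induction k as [|k IH]; intro c; (split; [intros; apply continuity_2d_pt_const|]).
  - exact I.
  - assert (Hdt : dt (fun _ _ => c) = fun _ _ => 0).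
    { do 2 (apply functional_extensionality; intro). apply (Derive_const c). }
    assert (Hdu : du (fun _ _ => c) = fun _ _ => 0).
    { do 2 (apply functional_extensionality; intro). apply (Derive_const c). }
    rewrite Hdt, Hdu. repeat split; auto; intros; apply ex_derive_const.
Qed.

Section Smoothness.
Variable D : R -> R -> Prop.

Lemma smooth_const c : smooth_on D (fun _ _ => c).
Proof. intros k. apply Ck_const. Qed.
Lemma smooth_dt f : smooth_on D f -> smooth_on D (dt f).
Proof. intros Hf k. apply (Hf (S k)). Qed.
Lemma smooth_du f : smooth_on D f -> smooth_on D (du f).
Proof. intros Hf k. apply (Hf (S k)). Qed.
Lemma smooth_continuous f t u : smooth_on D f -> D t u -> continuity_2d_pt f t u.
Proof. intros Hf H. exact (proj1 (Hf 0%nat) t u H). Qed.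
Lemma smooth_ex_derive_t f t u : smooth_on D f -> D t u -> ex_derive (fun y => f y u) t.
Proof. intros Hf H. exact (proj1 (proj2 (Hf 1%nat)) t u H). Qed.
Lemma smooth_ex_derive_u f t u : smooth_on D f -> D t u -> ex_derive (fun y => f t y) u.
Proof. intros Hf H. exact (proj1 (proj2 (proj2 (Hf 1%nat))) t u H). Qed.

Hypothesis D_open : open_2d D.

Lemma Ck_ext k f g : (forall t u, D t u -> f t u = g t u) -> Ck D k f -> Ck D k g.
Proof.
  revert f g; induction k as [|k IH]; intros f g Efg Hf.
  - split; [|exact I]. intros t u H.
    apply continuity_2d_pt_ext_loc with f; [apply (locally_2d_of_open D)|apply Hf]; auto.
  - destruct Hf as [Hc [Ht [Hu [Hdt Hdu]]]].
    split; [|split; [|split; [|split]]]; intros.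
    + apply continuity_2d_pt_ext_loc with f; [apply (locally_2d_of_open D)|]; auto.
    + apply ex_derive_ext_loc with (fun y => f y u); auto.
      apply (locally_t_of_open D (fun a b => f a b = g a b)); auto.
    + apply ex_derive_ext_loc with (fun y => f t y); auto.
      apply (locally_u_of_open D (fun a b => f a b = g a b)); auto.
    + apply IH with (dt f); auto. intros t u H.
      apply Derive_ext_loc, (locally_t_of_open D (fun a b => f a b = g a b)); auto.
    + apply IH with (du f); auto. intros t u H.
      apply Derive_ext_loc, (locally_u_of_open D (fun a b => f a b = g a b)); auto.
Qed.

Lemma Ck_plus k f g : Ck D k f -> Ck D k g -> Ck D k (fun a b => f a b + g a b).
Proof.
  revert f g; induction k as [|k IH]; intros f g Hf Hg.
  - split; [|exact I]. intros; apply continuity_2d_pt_plus; [apply Hf|apply Hg]; auto.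
  - destruct Hf as [cf [tf [uf [dtf duf]]]], Hg as [cg [tg [ug [dtg dug]]]].
    split; [intros; apply continuity_2d_pt_plus; auto|].
    split; [intros; apply (@ex_derive_plus R_AbsRing R_NormedModule); auto|].
    split; [intros; apply (@ex_derive_plus R_AbsRing R_NormedModule); auto|].
    split.
    + apply Ck_ext with (fun a b => dt f a b + dt g a b); auto.
      intros t u H. symmetry. apply Derive_plus; auto.
    + apply Ck_ext with (fun a b => du f a b + du g a b); auto.
      intros t u H. symmetry. apply Derive_plus; auto.
Qed.

Lemma Ck_mult k f g : Ck D k f -> Ck D k g -> Ck D k (fun a b => f a b * g a b).
Proof.
  revert f g; induction k as [|k IH]; intros f g Hf Hg.
  - split; [|exact I]. intros; apply continuity_2d_pt_mult; [apply Hf|apply Hg]; auto.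
  - pose proof (Ck_pred _ _ _ Hf) as Hf'. pose proof (Ck_pred _ _ _ Hg) as Hg'.
    destruct Hf as [cf [tf [uf [dtf duf]]]], Hg as [cg [tg [ug [dtg dug]]]].
    split; [intros; apply continuity_2d_pt_mult; auto|].
    split; [intros; apply ex_derive_mult; auto|].
    split; [intros; apply ex_derive_mult; auto|].
    split.
    + apply Ck_ext with (fun a b => dt f a b * g a b + f a b * dt g a b).
      * intros t u H. symmetry. apply Derive_mult; auto.
      * apply Ck_plus; apply IH; auto.
    + apply Ck_ext with (fun a b => du f a b * g a b + f a b * du g a b).
      * intros t u H. symmetry. apply Derive_mult; auto.
      * apply Ck_plus; apply IH; auto.
Qed.

Lemma Ck0_comp (phi phi' : R -> R) (V : R -> Prop) f :
  (forall x, V x -> is_derive phi x (phi' x)) -> (forall t u, D t u -> V (f t u)) ->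
  Ck D 0 f -> Ck D 0 (fun a b => phi (f a b)).
Proof.
  intros Hphi HV [Hf _]. split; [|exact I]. intros t u H.
  apply continuity_1d_2d_pt_comp; [|exact (Hf t u H)].
  apply derivable_continuous_pt. exists (phi' (f t u)).
  apply is_derive_Reals, Hphi, HV, H.
Qed.

Lemma Ck_comp (phi phi' : R -> R) (V : R -> Prop) k f :
  (forall x, V x -> is_derive phi x (phi' x)) -> (forall t u, D t u -> V (f t u)) ->
  Ck D k (fun a b => phi' (f a b)) -> Ck D (S k) f -> Ck D (S k) (fun a b => phi (f a b)).
Proof.
  intros Hphi HV Hphi' Hf.
  assert (Hchain : forall (g : R -> R) x, ex_derive g x -> V (g x) ->
    is_derive (fun y => phi (g y)) x (phi' (g x) * Derive g x)).
  { intros g x Hg HVg. rewrite Rmult_comm.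
    apply (is_derive_comp phi g x (phi' (g x)) (Derive g x));
      [apply Hphi; exact HVg | apply Derive_correct; exact Hg]. }
  destruct Hf as [Hc [Ht [Hu [Hdt Hdu]]]].
  split; [apply (Ck0_comp phi phi' V); auto; split; [exact Hc | exact I] |].
  split; [intros t u H; eexists; apply Hchain; auto|].
  split; [intros t u H; eexists; apply Hchain; auto|].
  split.
  - apply Ck_ext with (fun a b => phi' (f a b) * dt f a b); [|apply Ck_mult; auto].
    intros t u H. symmetry. apply is_derive_unique, Hchain; auto.
  - apply Ck_ext with (fun a b => phi' (f a b) * du f a b); [|apply Ck_mult; auto].
    intros t u H. symmetry. apply is_derive_unique, Hchain; auto.
Qed.

Lemma Ck_scal k c f : Ck D k f -> Ck D k (fun a b => c * f a b).
Proof. intros Hf. exact (Ck_mult k _ _ (Ck_const D k c) Hf). Qed.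

Lemma Ck_inv k f : (forall t u, D t u -> f t u <> 0) -> Ck D k f -> Ck D k (fun a b => / f a b).
Proof.
  intros Hnz. assert (Hderiv : forall x, x <> 0 -> is_derive Rinv x (-1 * (/ x * / x))).
  { intros x Hx. auto_derive; [exact Hx | field; exact Hx]. }
  induction k as [|k IH]; intros Hf.
  - exact (Ck0_comp Rinv _ _ f Hderiv Hnz Hf).
  - apply (Ck_comp Rinv _ _ k f Hderiv Hnz); [|exact Hf].
    apply Ck_scal, Ck_mult; apply IH, Ck_pred, Hf.
Qed.

Lemma Ck_sqrt k f : (forall t u, D t u -> 0 < f t u) -> Ck D k f ->
  Ck D k (fun a b => sqrt (f a b)).
Proof.
  intros Hpos. assert (Hderiv : forall x, 0 < x -> is_derive sqrt x (/ (2 * sqrt x))).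
  { intros x Hx. auto_derive; [exact Hx | ring]. }
  induction k as [|k IH]; intros Hf.
  - exact (Ck0_comp sqrt _ _ f Hderiv Hpos Hf).
  - apply (Ck_comp sqrt _ _ k f Hderiv Hpos); [|exact Hf].
    apply (Ck_inv k (fun a b => 2 * sqrt (f a b))).
    + intros t u H. specialize (Hpos t u H). apply Rgt_not_eq, Rmult_lt_0_compat;
        [lra | apply sqrt_lt_R0, Hpos].
    + apply Ck_scal, IH, Ck_pred, Hf.
Qed.

Lemma Ck_sin_cos k f : Ck D k f ->
  Ck D k (fun a b => sin (f a b)) /\ Ck D k (fun a b => cos (f a b)).
Proof.
  assert (Hsin : forall x, True -> is_derive sin x (cos x)) by (intros; apply is_derive_sin).
  assert (Hcos : forall x, True -> is_derive cos x (-1 * sin x)).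
  { intros x _. replace (-1 * sin x) with (- sin x) by ring. apply is_derive_cos. }
  assert (HV : forall t u, D t u -> True) by auto.
  revert f; induction k as [|k IH]; intros f Hf.
  - split; [exact (Ck0_comp sin _ _ f Hsin HV Hf) | exact (Ck0_comp cos _ _ f Hcos HV Hf)].
  - destruct (IH f (Ck_pred _ _ _ Hf)) as [IHs IHc]. split.
    + exact (Ck_comp sin _ _ k f Hsin HV IHc Hf).
    + exact (Ck_comp cos _ _ k f Hcos HV (Ck_scal k (-1) _ IHs) Hf).
Qed.

Lemma smooth_ext f g : (forall t u, D t u -> f t u = g t u) -> smooth_on D f -> smooth_on D g.
Proof. intros Efg Hf k. exact (Ck_ext k f g Efg (Hf k)). Qed.
Lemma smooth_plus f g : smooth_on D f -> smooth_on D g -> smooth_on D (fun a b => f a b + g a b).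
Proof. intros Hf Hg k. apply Ck_plus; auto. Qed.
Lemma smooth_mult f g : smooth_on D f -> smooth_on D g -> smooth_on D (fun a b => f a b * g a b).
Proof. intros Hf Hg k. apply Ck_mult; auto. Qed.
Lemma smooth_minus f g : smooth_on D f -> smooth_on D g -> smooth_on D (fun a b => f a b - g a b).
Proof.
  intros Hf Hg. apply smooth_ext with (fun a b => f a b + -1 * g a b); [intros; ring|].
  apply smooth_plus; [|apply smooth_mult; [apply smooth_const|]]; assumption.
Qed.
Lemma smooth_inv f : (forall t u, D t u -> f t u <> 0) -> smooth_on D f ->
  smooth_on D (fun a b => / f a b).
Proof. intros Hnz Hf k. apply Ck_inv; auto. Qed.
Lemma smooth_sqrt f : (forall t u, D t u -> 0 < f t u) -> smooth_on D f ->
  smooth_on D (fun a b => sqrt (f a b)).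
Proof. intros Hpos Hf k. apply Ck_sqrt; auto. Qed.
Lemma smooth_sin f : smooth_on D f -> smooth_on D (fun a b => sin (f a b)).
Proof. intros Hf k. apply Ck_sin_cos, Hf. Qed.
Lemma smooth_cos f : smooth_on D f -> smooth_on D (fun a b => cos (f a b)).
Proof. intros Hf k. apply Ck_sin_cos, Hf. Qed.
Lemma smooth_dt_du f t u : smooth_on D f -> D t u -> dt (du f) t u = du (dt f) t u.
Proof.
  intros Hf H. apply Schwarz.
  - apply (locally_2d_of_open D); auto. intros a b Hab. repeat split.
    + apply smooth_ex_derive_t; auto.
    + apply smooth_ex_derive_u; auto.
    + apply (smooth_ex_derive_t (du f)); auto. apply smooth_du; auto.
    + apply (smooth_ex_derive_u (dt f)); auto. apply smooth_dt; auto.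
  - apply (smooth_continuous (dt (du f))); auto. apply smooth_dt, smooth_du; auto.
  - apply (smooth_continuous (du (dt f))); auto. apply smooth_du, smooth_dt; auto.
Qed.
End Smoothness.

Lemma smooth_subset D D' f : (forall t u, D' t u -> D t u) -> smooth_on D f -> smooth_on D' f.
Proof. intros HS Hf k. exact (Ck_subset D D' k f HS (Hf k)). Qed.

(** * Vector algebra *)

Lemma V3_eq (a b : V3) : v1 a = v1 b -> v2 a = v2 b -> v3 a = v3 b -> a = b.
Proof. destruct a as [[? ?] ?], b as [[? ?] ?]. cbv. intros -> -> ->. reflexivity. Qed.

Ltac vec_ring := try apply V3_eq; cbv [dot cross vadd vscal mkV3 v1 v2 v3 fst snd Rdiv]; ring.

Lemma dot_comm a b : dot a b = dot b a.
Proof. vec_ring. Qed.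
Lemma dot_vaddl a b c : dot (vadd a b) c = dot a c + dot b c.
Proof. vec_ring. Qed.
Lemma dot_vaddr a b c : dot a (vadd b c) = dot a b + dot a c.
Proof. vec_ring. Qed.
Lemma dot_vscall s a b : dot (vscal s a) b = s * dot a b.
Proof. vec_ring. Qed.
Lemma dot_vscalr s a b : dot a (vscal s b) = s * dot a b.
Proof. vec_ring. Qed.
Lemma vscal_1 a : vscal 1 a = a.
Proof. vec_ring. Qed.
Lemma vscal_vscal r s a : vscal r (vscal s a) = vscal (r * s) a.
Proof. vec_ring. Qed.
Lemma cross_vscall s a b : cross (vscal s a) b = vscal s (cross a b).
Proof. vec_ring. Qed.
Lemma cross_vscalr s a b : cross a (vscal s b) = vscal s (cross a b).
Proof. vec_ring. Qed.
Lemma dot_cross_l a b : dot a (cross a b) = 0.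
Proof. vec_ring. Qed.
Lemma dot_cross_r a b : dot b (cross a b) = 0.
Proof. vec_ring. Qed.
Lemma dot_cross_cross a b : dot (cross a b) (cross a b) = dot a a * dot b b - dot a b * dot a b.
Proof. vec_ring. Qed.

Lemma orthonormal_expand T N v : dot T T = 1 -> dot N N = 1 -> dot T N = 0 ->
  v = vadd (vscal (dot v T) T) (vadd (vscal (dot v N) N) (vscal (dot v (cross T N)) (cross T N))).
Proof.
  intros HT HN HTN.
  assert (Gram : vscal (dot T T * dot N N - dot T N * dot T N) v =
    vadd (vscal (dot v T) (vadd (vscal (dot N N) T) (vscal (- dot T N) N)))
      (vadd (vscal (dot v N) (vadd (vscal (dot T T) N) (vscal (- dot T N) T)))
        (vscal (dot v (cross T N)) (cross T N)))) by vec_ring.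
  rewrite HT, HN, HTN, Rmult_0_l, Rminus_0_r, Rmult_1_l, vscal_1 in Gram.
  rewrite Gram at 1. vec_ring.
Qed.

Lemma cross_rotated T N c s : dot T T = 1 -> dot T N = 0 ->
  cross (vadd (vscal c N) (vscal s (cross T N))) T = vadd (vscal s N) (vscal (- c) (cross T N)).
Proof.
  intros HT HTN.
  assert (E : cross (vadd (vscal c N) (vscal s (cross T N))) T =
    vadd (vscal s (vadd (vscal (dot T T) N) (vscal (- dot T N) T))) (vscal (- c) (cross T N)))
    by vec_ring.
  rewrite E, HT, HTN. vec_ring.
Qed.

Lemma normalize_unit c X : 0 < c -> c = vnorm X -> dot (vscal (/ c) X) (vscal (/ c) X) = 1.
Proof.
  intros Hc E. rewrite dot_vscall, dot_vscalr.
  assert (HX : c * c = dot X X).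
  { rewrite E. apply sqrt_sqrt. unfold dot. nra. }
  rewrite <- HX. field. lra.
Qed.

Lemma vscal_inv_cancel c X : c <> 0 -> vscal c (vscal (/ c) X) = X.
Proof. intros Hc. rewrite vscal_vscal, Rinv_r by exact Hc. apply vscal_1. Qed.

Lemma normalize_vscal c m : 0 < c -> dot m m = 1 -> vscal (/ vnorm (vscal c m)) (vscal c m) = m.
Proof.
  intros Hc Hm. unfold vnorm. rewrite dot_vscall, dot_vscalr, Hm, Rmult_1_r.
  rewrite sqrt_square by lra. rewrite vscal_vscal, Rinv_l by lra. apply vscal_1.
Qed.

Lemma gauss_curv_orthogonal X t u a b (n T : V3) :
  0 < a -> 0 < b -> dot n n = 1 -> dot T T = 1 -> dot n T = 0 ->
  Dt X t u = vscal a n -> Du X t u = vscal b T ->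
  gauss_curv X t u =
    (dot (Dt (Dt X) t u) (cross n T) * dot (Du (Du X) t u) (cross n T)
     - dot (Du (Dt X) t u) (cross n T) ^ 2) / (a ^ 2 * b ^ 2).
Proof.
  intros Ha Hb Hn HT HnT HXt HXu.
  assert (Hm : dot (cross n T) (cross n T) = 1)
    by (rewrite dot_cross_cross, Hn, HT, HnT; ring).
  unfold gauss_curv. cbv zeta. rewrite HXt, HXu, cross_vscall, cross_vscalr, (vscal_vscal a b).
  rewrite normalize_vscal by (try apply Rmult_lt_0_compat; assumption).
  rewrite !dot_vscall, !dot_vscalr, Hn, HT, HnT.
  set (L := dot (Dt (Dt X) t u) (cross n T)). set (M := dot (Du (Dt X) t u) (cross n T)).
  set (N := dot (Du (Du X) t u) (cross n T)).
  field. lra.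
Qed.

(** * Derivatives of vector-valued functions *)

(* [Du X t u] and [Dt X t u] are convertible to [Derive3] of the coordinate lines
   [fun y => X t y] and [fun y => X y u]. *)
Definition Derive3 (x : R -> V3) (z : R) : V3 :=
  mkV3 (Derive (fun y => v1 (x y)) z) (Derive (fun y => v2 (x y)) z) (Derive (fun y => v3 (x y)) z).
Definition ex_derive3 (x : R -> V3) (z : R) : Prop :=
  ex_derive (fun y => v1 (x y)) z /\ ex_derive (fun y => v2 (x y)) z /\
  ex_derive (fun y => v3 (x y)) z.

Section VectorDerivative.
Variables (x w : R -> V3) (z : R).
Hypotheses (Hx : ex_derive3 x z) (Hw : ex_derive3 w z).

Lemma ex_derive3_vscal (c : R -> R) : ex_derive c z -> ex_derive3 (fun y => vscal (c y) (x y)) z.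
Proof. destruct Hx as [H1 [H2 H3]]. intros Hc. repeat split; apply ex_derive_mult; assumption. Qed.

Lemma Derive3_vscal (c : R -> R) : ex_derive c z ->
  Derive3 (fun y => vscal (c y) (x y)) z =
  vadd (vscal (Derive c z) (x z)) (vscal (c z) (Derive3 x z)).
Proof.
  destruct Hx as [H1 [H2 H3]]. intros Hc.
  apply V3_eq; cbv [Derive3 vadd vscal mkV3 v1 v2 v3 fst snd]; apply Derive_mult; assumption.
Qed.

Lemma Derive3_vadd : Derive3 (fun y => vadd (x y) (w y)) z = vadd (Derive3 x z) (Derive3 w z).
Proof.
  destruct Hx as [H1 [H2 H3]], Hw as [G1 [G2 G3]].
  apply V3_eq; cbv [Derive3 vadd mkV3 v1 v2 v3 fst snd]; apply Derive_plus; assumption.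
Qed.

Lemma Derive_dot :
  Derive (fun y => dot (x y) (w y)) z = dot (Derive3 x z) (w z) + dot (x z) (Derive3 w z).
Proof.
  destruct Hx as [H1 [H2 H3]], Hw as [G1 [G2 G3]]. unfold dot at 1.
  pose proof (ex_derive_mult _ _ _ H1 G1) as E1.
  pose proof (ex_derive_mult _ _ _ H2 G2) as E2.
  pose proof (ex_derive_mult _ _ _ H3 G3) as E3.
  rewrite Derive_plus; [|apply (@ex_derive_plus R_AbsRing R_NormedModule); assumption | assumption].
  rewrite Derive_plus by assumption.
  rewrite !Derive_mult by assumption.
  cbv [Derive3 dot mkV3 v1 v2 v3 fst snd]. ring.
Qed.

Lemma Derive3_dot_const c : locally z (fun y => dot (x y) (w y) = c) ->
  dot (Derive3 x z) (w z) + dot (x z) (Derive3 w z) = 0.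
Proof.
  intros Hc. rewrite <- Derive_dot, (Derive_ext_loc _ (fun _ => c)) by exact Hc.
  apply Derive_const.
Qed.
End VectorDerivative.

Lemma Derive3_rotated_normal (N B : R -> V3) (th : R -> R) z :
  ex_derive3 N z -> ex_derive3 B z -> ex_derive th z ->
  locally z (fun y => dot (N y) (N y) = 1) -> locally z (fun y => dot (B y) (B y) = 1) ->
  locally z (fun y => dot (N y) (B y) = 0) ->
  let nu := fun y => vadd (vscal (cos (th y)) (N y)) (vscal (sin (th y)) (B y)) in
  dot (Derive3 nu z) (N z) = - sin (th z) * (Derive th z + dot (Derive3 N z) (B z)) /\
  dot (Derive3 nu z) (B z) = cos (th z) * (Derive th z + dot (Derive3 N z) (B z)).
Proof.
  intros HN HB Hth HNN HBB HNB nu.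
  assert (Xcos : ex_derive (fun y => cos (th y)) z)
    by (apply ex_derive_comp; [eexists; apply is_derive_cos | exact Hth]).
  assert (Xsin : ex_derive (fun y => sin (th y)) z)
    by (apply ex_derive_comp; [eexists; apply is_derive_sin | exact Hth]).
  assert (Ecos : Derive (fun y => cos (th y)) z = - sin (th z) * Derive th z).
  { apply is_derive_unique. rewrite Rmult_comm.
    apply (is_derive_comp cos th z); [apply is_derive_cos | apply Derive_correct, Hth]. }
  assert (Esin : Derive (fun y => sin (th y)) z = cos (th z) * Derive th z).
  { apply is_derive_unique. rewrite Rmult_comm.
    apply (is_derive_comp sin th z); [apply is_derive_sin | apply Derive_correct, Hth]. }
  assert (Hdnu : Derive3 nu z = vadd
      (vadd (vscal (- sin (th z) * Derive th z) (N z)) (vscal (cos (th z)) (Derive3 N z)))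
      (vadd (vscal (cos (th z) * Derive th z) (B z)) (vscal (sin (th z)) (Derive3 B z)))).
  { unfold nu. rewrite Derive3_vadd by (apply ex_derive3_vscal; assumption).
    rewrite !Derive3_vscal, Ecos, Esin by assumption. reflexivity. }
  pose proof (Derive3_dot_const N N z HN HN 1 HNN) as DNN.
  pose proof (Derive3_dot_const B B z HB HB 1 HBB) as DBB.
  pose proof (Derive3_dot_const N B z HN HB 0 HNB) as DNB.
  pose proof (locally_singleton _ _ HNN) as ENN. pose proof (locally_singleton _ _ HBB) as EBB.
  pose proof (locally_singleton _ _ HNB) as ENB. simpl in ENN, EBB, ENB.
  rewrite (dot_comm (N z)) in DNN, DNB. rewrite (dot_comm (B z)) in DBB.
  rewrite Hdnu, !dot_vaddl, !dot_vscall, ENN, EBB, (dot_comm (B z)), ENB.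
  split.
  - replace (dot (Derive3 B z) (N z)) with (- dot (Derive3 N z) (B z)) by lra.
    replace (dot (Derive3 N z) (N z)) with 0 by lra. ring.
  - replace (dot (Derive3 B z) (B z)) with 0 by lra. ring.
Qed.

(* The flow equation is only assumed for [t >= 0], so at [t = 0] second time derivatives
   are identified through one-sided agreement. *)
Lemma is_derive_zero_right (k : R -> R) x d l : 0 < d -> is_derive k x l ->
  (forall y, x <= y < x + d -> k y = 0) -> l = 0.
Proof.
  intros Hd Hk Hzero. apply is_derive_Reals in Hk.
  destruct (Req_dec l 0) as [|Hl]; [assumption | exfalso].
  destruct (Hk (Rabs l) (Rabs_pos_lt _ Hl)) as [del Hdel]. pose proof (cond_pos del).
  set (h := Rmin (del / 2) (d / 2)).
  assert (Hh : 0 < h) by (apply Rmin_pos; lra).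
  assert (h <= del / 2) by apply Rmin_l. assert (h <= d / 2) by apply Rmin_r.
  specialize (Hdel h (Rgt_not_eq _ _ Hh) ltac:(rewrite Rabs_pos_eq; lra)).
  rewrite !Hzero in Hdel by lra.
  replace ((0 - 0) / h - l) with (- l) in Hdel by (field; lra).
  rewrite Rabs_Ropp in Hdel. lra.
Qed.

Lemma Derive_eq_right (f g : R -> R) x d : 0 < d -> ex_derive f x -> ex_derive g x ->
  (forall y, x <= y < x + d -> f y = g y) -> Derive f x = Derive g x.
Proof.
  intros Hd Hf Hg Efg. apply Rminus_diag_uniq.
  apply (is_derive_zero_right (fun y => f y - g y) x d); [exact Hd | |].
  - apply (@is_derive_minus R_AbsRing R_NormedModule); apply Derive_correct; assumption.
  - intros y Hy. rewrite Efg by exact Hy. ring.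
Qed.

Section PartialDerivatives.
Variable D : R -> R -> Prop.

Lemma smooth3_ex_derive3_t X t u : smooth_on3 D X -> D t u -> ex_derive3 (fun y => X y u) t.
Proof.
  intros [H1 [H2 H3]] H. split; [|split];
    [exact (smooth_ex_derive_t D (fun a b => v1 (X a b)) t u H1 H)
    |exact (smooth_ex_derive_t D (fun a b => v2 (X a b)) t u H2 H)
    |exact (smooth_ex_derive_t D (fun a b => v3 (X a b)) t u H3 H)].
Qed.
Lemma smooth3_ex_derive3_u X t u : smooth_on3 D X -> D t u -> ex_derive3 (fun y => X t y) u.
Proof.
  intros [H1 [H2 H3]] H. split; [|split];
    [exact (smooth_ex_derive_u D (fun a b => v1 (X a b)) t u H1 H)
    |exact (smooth_ex_derive_u D (fun a b => v2 (X a b)) t u H2 H)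
    |exact (smooth_ex_derive_u D (fun a b => v3 (X a b)) t u H3 H)].
Qed.

Lemma smooth3_subset D' X : (forall t u, D' t u -> D t u) -> smooth_on3 D X -> smooth_on3 D' X.
Proof. intros HS [H1 [H2 H3]]. repeat split; apply (smooth_subset D); assumption. Qed.

Lemma Dt_vscal c X t u : smooth_on D c -> smooth_on3 D X -> D t u ->
  Dt (fun a b => vscal (c a b) (X a b)) t u =
  vadd (vscal (dt c t u) (X t u)) (vscal (c t u) (Dt X t u)).
Proof.
  intros Hc HX H.
  exact (Derive3_vscal _ t (smooth3_ex_derive3_t X t u HX H) _ (smooth_ex_derive_t D c t u Hc H)).
Qed.
Lemma Du_vscal c X t u : smooth_on D c -> smooth_on3 D X -> D t u ->
  Du (fun a b => vscal (c a b) (X a b)) t u =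
  vadd (vscal (du c t u) (X t u)) (vscal (c t u) (Du X t u)).
Proof.
  intros Hc HX H.
  exact (Derive3_vscal _ u (smooth3_ex_derive3_u X t u HX H) _ (smooth_ex_derive_u D c t u Hc H)).
Qed.

Lemma du_dot X Y t u : smooth_on3 D X -> smooth_on3 D Y -> D t u ->
  du (fun a b => dot (X a b) (Y a b)) t u = dot (Du X t u) (Y t u) + dot (X t u) (Du Y t u).
Proof.
  intros HX HY H.
  exact (Derive_dot _ _ u (smooth3_ex_derive3_u X t u HX H) (smooth3_ex_derive3_u Y t u HY H)).
Qed.

Lemma du_plus f h t u : smooth_on D f -> smooth_on D h -> D t u ->
  du (fun a b => f a b + h a b) t u = du f t u + du h t u.
Proof. intros Hf Hh H. apply Derive_plus; apply (smooth_ex_derive_u D); assumption. Qed.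
Lemma du_mult f h t u : smooth_on D f -> smooth_on D h -> D t u ->
  du (fun a b => f a b * h a b) t u = du f t u * h t u + f t u * du h t u.
Proof. intros Hf Hh H. apply Derive_mult; apply (smooth_ex_derive_u D); assumption. Qed.
Lemma du_sin f t u : smooth_on D f -> D t u ->
  du (fun a b => sin (f a b)) t u = cos (f t u) * du f t u.
Proof.
  intros Hf H. apply is_derive_unique. rewrite Rmult_comm.
  apply (is_derive_comp sin (fun y => f t y)); [apply is_derive_sin|].
  apply Derive_correct, (smooth_ex_derive_u D f t u Hf H).
Qed.
Lemma du_cos f t u : smooth_on D f -> D t u ->
  du (fun a b => cos (f a b)) t u = - sin (f t u) * du f t u.
Proof.
  intros Hf H. apply is_derive_unique. rewrite Rmult_comm.
  apply (is_derive_comp cos (fun y => f t y)); [apply is_derive_cos|].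
  apply Derive_correct, (smooth_ex_derive_u D f t u Hf H).
Qed.

Lemma Du_ext_loc X Y t u : locally u (fun y => X t y = Y t y) -> Du X t u = Du Y t u.
Proof.
  intros E. unfold Du, du. f_equal; apply Derive_ext_loc;
    (eapply filter_imp; [|exact E]); intros y Hy; rewrite Hy; reflexivity.
Qed.
Lemma du_ext_loc f g t u : locally u (fun y => f t y = g t y) -> du f t u = du g t u.
Proof. intros E. apply Derive_ext_loc, E. Qed.

Lemma Dt_eq_right X Y t u d : smooth_on3 D X -> smooth_on3 D Y -> D t u -> 0 < d ->
  (forall y, t <= y < t + d -> X y u = Y y u) -> Dt X t u = Dt Y t u.
Proof.
  intros HX HY H Hd E.
  destruct (smooth3_ex_derive3_t X t u HX H) as [H1 [H2 H3]].
  destruct (smooth3_ex_derive3_t Y t u HY H) as [G1 [G2 G3]].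
  apply V3_eq; apply (Derive_eq_right _ _ t d Hd); try assumption;
    intros y Hy; rewrite E by exact Hy; reflexivity.
Qed.

Hypothesis D_open : open_2d D.

Lemma smooth3_Dt X : smooth_on3 D X -> smooth_on3 D (Dt X).
Proof. intros [H1 [H2 H3]]. repeat split; apply smooth_dt; assumption. Qed.
Lemma smooth3_Du X : smooth_on3 D X -> smooth_on3 D (Du X).
Proof. intros [H1 [H2 H3]]. repeat split; apply smooth_du; assumption. Qed.
Lemma smooth3_vscal c X : smooth_on D c -> smooth_on3 D X ->
  smooth_on3 D (fun a b => vscal (c a b) (X a b)).
Proof. intros Hc [H1 [H2 H3]]. repeat split; apply smooth_mult; assumption. Qed.
Lemma smooth3_vadd X Y : smooth_on3 D X -> smooth_on3 D Y ->
  smooth_on3 D (fun a b => vadd (X a b) (Y a b)).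
Proof. intros [H1 [H2 H3]] [G1 [G2 G3]]. repeat split; apply smooth_plus; assumption. Qed.
Lemma smooth_dot X Y : smooth_on3 D X -> smooth_on3 D Y ->
  smooth_on D (fun a b => dot (X a b) (Y a b)).
Proof.
  intros [H1 [H2 H3]] [G1 [G2 G3]]. unfold dot.
  repeat apply smooth_plus; auto; apply smooth_mult; assumption.
Qed.
Lemma smooth3_cross X Y : smooth_on3 D X -> smooth_on3 D Y ->
  smooth_on3 D (fun a b => cross (X a b) (Y a b)).
Proof.
  intros [H1 [H2 H3]] [G1 [G2 G3]]. unfold cross.
  repeat split; apply smooth_minus; auto; apply smooth_mult; assumption.
Qed.

Lemma Dt_Du X t u : smooth_on3 D X -> D t u -> Dt (Du X) t u = Du (Dt X) t u.
Proof. intros [H1 [H2 H3]] H. apply V3_eq; apply (smooth_dt_du D D_open); assumption. Qed.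

Lemma Du_dot_const X Y c t u : smooth_on3 D X -> smooth_on3 D Y ->
  (forall a b, D a b -> dot (X a b) (Y a b) = c) -> D t u ->
  dot (Du X t u) (Y t u) + dot (X t u) (Du Y t u) = 0.
Proof.
  intros HX HY E H.
  apply (Derive3_dot_const _ _ u (smooth3_ex_derive3_u X t u HX H) (smooth3_ex_derive3_u Y t u HY H) c).
  exact (locally_u_of_open D (fun a b => dot (X a b) (Y a b) = c) t u D_open E H).
Qed.
End PartialDerivatives.

Section ArcLengthDerivative.
Variables (gam : R -> R -> V3) (D : R -> R -> Prop).

Lemma ds_plus f h t u : smooth_on D f -> smooth_on D h -> D t u ->
  ds gam (fun a b => f a b + h a b) t u = ds gam f t u + ds gam h t u.
Proof. intros Hf Hh H. unfold ds. rewrite (du_plus D) by assumption. unfold Rdiv. ring. Qed.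
Lemma ds_mult f h t u : smooth_on D f -> smooth_on D h -> D t u ->
  ds gam (fun a b => f a b * h a b) t u = ds gam f t u * h t u + f t u * ds gam h t u.
Proof. intros Hf Hh H. unfold ds. rewrite (du_mult D) by assumption. unfold Rdiv. ring. Qed.
Lemma ds_sin f t u : smooth_on D f -> D t u ->
  ds gam (fun a b => sin (f a b)) t u = cos (f t u) * ds gam f t u.
Proof. intros Hf H. unfold ds. rewrite (du_sin D) by assumption. unfold Rdiv. ring. Qed.
Lemma ds_cos f t u : smooth_on D f -> D t u ->
  ds gam (fun a b => cos (f a b)) t u = - sin (f t u) * ds gam f t u.
Proof. intros Hf H. unfold ds. rewrite (du_cos D) by assumption. unfold Rdiv. ring. Qed.

Lemma ds_dot X Y t u : smooth_on3 D X -> smooth_on3 D Y -> D t u ->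
  ds gam (fun a b => dot (X a b) (Y a b)) t u =
  dot (Ds gam X t u) (Y t u) + dot (X t u) (Ds gam Y t u).
Proof.
  intros HX HY H. unfold ds, Ds. rewrite (du_dot D) by assumption.
  rewrite dot_vscall, dot_vscalr. unfold Rdiv. ring.
Qed.

Lemma Ds_vscal c X t u : smooth_on D c -> smooth_on3 D X -> D t u ->
  Ds gam (fun a b => vscal (c a b) (X a b)) t u =
  vadd (vscal (ds gam c t u) (X t u)) (vscal (c t u) (Ds gam X t u)).
Proof. intros Hc HX H. unfold Ds, ds. rewrite (Du_vscal D) by assumption. vec_ring. Qed.

Lemma Ds_dot_const X Y c t u : open_2d D -> smooth_on3 D X -> smooth_on3 D Y ->
  (forall a b, D a b -> dot (X a b) (Y a b) = c) -> D t u ->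
  dot (Ds gam X t u) (Y t u) + dot (X t u) (Ds gam Y t u) = 0.
Proof.
  intros HD HX HY E H. unfold Ds. rewrite dot_vscall, dot_vscalr, <- Rmult_plus_distr_l.
  rewrite (Du_dot_const D HD X Y c) by assumption. ring.
Qed.
Lemma Ds_ext_loc X Y t u : locally u (fun y => X t y = Y t y) -> Ds gam X t u = Ds gam Y t u.
Proof. intros E. unfold Ds. rewrite (Du_ext_loc X Y t u E). reflexivity. Qed.
Lemma ds_ext_loc f g t u : locally u (fun y => f t y = g t y) -> ds gam f t u = ds gam g t u.
Proof. intros E. unfold ds. rewrite (du_ext_loc f g t u E). reflexivity. Qed.
End ArcLengthDerivative.

(** * The Frenet frame along the flow *)

Lemma Du_gspeed_Ds gam X t u : gspeed gam t u <> 0 ->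
  Du X t u = vscal (gspeed gam t u) (Ds gam X t u).
Proof. intros Hg. symmetry. apply vscal_inv_cancel, Hg. Qed.

Lemma Tan_unit gam t u : 0 < gspeed gam t u -> dot (Tan gam t u) (Tan gam t u) = 1.
Proof. intros Hg. apply normalize_unit; [exact Hg | reflexivity]. Qed.

Lemma Ds_Tan gam t u : curv gam t u <> 0 ->
  Ds gam (Tan gam) t u = vscal (curv gam t u) (Nor gam t u).
Proof. intros Hk. symmetry. apply vscal_inv_cancel, Hk. Qed.

Lemma Nor_unit gam t u : 0 < curv gam t u -> dot (Nor gam t u) (Nor gam t u) = 1.
Proof. intros Hk. apply normalize_unit; [exact Hk | reflexivity]. Qed.

Lemma sqrt_pos_arg x : 0 < sqrt x -> 0 < x.
Proof. intros H. apply sqrt_lt_0_alt. rewrite sqrt_0. exact H. Qed.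

Section Tangent.
Variables (gam : R -> R -> V3) (D : R -> R -> Prop).
Hypotheses (D_open : open_2d D) (gam_smooth : smooth_on3 D gam)
  (gspeed_pos : forall t u, D t u -> 0 < gspeed gam t u).

Lemma smooth_gspeed : smooth_on D (gspeed gam).
Proof.
  pose proof (smooth3_Du D gam gam_smooth) as Hu.
  apply (smooth_sqrt D D_open); [|exact (smooth_dot D D_open _ _ Hu Hu)].
  intros t u H. apply sqrt_pos_arg, gspeed_pos, H.
Qed.

Lemma smooth_inv_gspeed : smooth_on D (fun a b => / gspeed gam a b).
Proof.
  apply (smooth_inv D D_open); [|exact smooth_gspeed].
  intros t u H. apply Rgt_not_eq, gspeed_pos, H.
Qed.

Lemma smooth_ds f : smooth_on D f -> smooth_on D (ds gam f).
Proof. intros Hf. exact (smooth_mult D D_open _ _ (smooth_du D f Hf) smooth_inv_gspeed). Qed.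

Lemma smooth3_Ds X : smooth_on3 D X -> smooth_on3 D (Ds gam X).
Proof. intros HX. exact (smooth3_vscal D D_open _ _ smooth_inv_gspeed (smooth3_Du D X HX)). Qed.

Lemma smooth3_Tan : smooth_on3 D (Tan gam).
Proof. exact (smooth3_Ds gam gam_smooth). Qed.

Section Frame.
Variable th : R -> R -> R.
Hypotheses (th_smooth : smooth_on D th) (curv_pos : forall t u, D t u -> 0 < curv gam t u).

Lemma smooth_curv : smooth_on D (curv gam).
Proof.
  pose proof (smooth3_Ds _ smooth3_Tan) as HT.
  apply (smooth_sqrt D D_open); [|exact (smooth_dot D D_open _ _ HT HT)].
  intros t u H. apply sqrt_pos_arg, curv_pos, H.
Qed.

Lemma smooth_inv_curv : smooth_on D (fun a b => / curv gam a b).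
Proof.
  apply (smooth_inv D D_open); [|exact smooth_curv].
  intros t u H. apply Rgt_not_eq, curv_pos, H.
Qed.

Lemma smooth3_Nor : smooth_on3 D (Nor gam).
Proof. exact (smooth3_vscal D D_open _ _ smooth_inv_curv (smooth3_Ds _ smooth3_Tan)). Qed.

Lemma smooth3_Bin : smooth_on3 D (Bin gam).
Proof. exact (smooth3_cross D D_open _ _ smooth3_Tan smooth3_Nor). Qed.

Lemma smooth_psi3 : smooth_on D (psi3 gam th).
Proof.
  apply (smooth_plus D D_open); [|exact (smooth_ds th th_smooth)].
  exact (smooth_dot D D_open _ _ (smooth3_Ds _ smooth3_Nor) smooth3_Bin).
Qed.

Lemma smooth3_nu : smooth_on3 D (nu_th gam th).
Proof.
  apply (smooth3_vadd D D_open); apply (smooth3_vscal D D_open).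
  - exact (smooth_cos D D_open th th_smooth).
  - exact smooth3_Nor.
  - exact (smooth_sin D D_open th th_smooth).
  - exact smooth3_Bin.
Qed.

Lemma Tan_Nor_orth t u : D t u -> dot (Tan gam t u) (Nor gam t u) = 0.
Proof.
  intros H. pose proof (curv_pos t u H) as Hk.
  pose proof (Ds_dot_const gam D _ _ 1 t u D_open smooth3_Tan smooth3_Tan
    (fun a b Hab => Tan_unit gam a b (gspeed_pos a b Hab)) H) as E.
  rewrite Ds_Tan, dot_vscall, dot_vscalr, (dot_comm (Nor gam t u)) in E by lra.
  nra.
Qed.

Lemma Bin_unit t u : D t u -> dot (Bin gam t u) (Bin gam t u) = 1.
Proof.
  intros H. unfold Bin. rewrite dot_cross_cross, Tan_unit, Nor_unit, Tan_Nor_orth by auto. ring.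
Qed.

Lemma Tan_Bin_orth t u : dot (Tan gam t u) (Bin gam t u) = 0.
Proof. apply dot_cross_l. Qed.

Lemma Nor_Bin_orth t u : dot (Nor gam t u) (Bin gam t u) = 0.
Proof. apply dot_cross_r. Qed.

Lemma Du_Tan t u : D t u ->
  Du (Tan gam) t u = vscal (gspeed gam t u * curv gam t u) (Nor gam t u).
Proof.
  intros H. pose proof (gspeed_pos t u H). pose proof (curv_pos t u H).
  rewrite (Du_gspeed_Ds gam), Ds_Tan, vscal_vscal by lra. reflexivity.
Qed.

Lemma Ds_Bin t u : D t u -> Ds gam (Bin gam) t u = vscal (- tors gam t u) (Nor gam t u).
Proof.
  intros H.
  assert (HBT : dot (Ds gam (Bin gam) t u) (Tan gam t u) = 0).
  { pose proof (Ds_dot_const gam D _ _ 0 t u D_open smooth3_Bin smooth3_Tan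
      (fun a b _ => eq_trans (dot_comm _ _) (Tan_Bin_orth a b)) H) as E.
    rewrite Ds_Tan, dot_vscalr, (dot_comm _ (Nor gam t u)), Nor_Bin_orth in E
      by (apply Rgt_not_eq, curv_pos, H).
    lra. }
  assert (HBN : dot (Ds gam (Bin gam) t u) (Nor gam t u) = - tors gam t u).
  { pose proof (Ds_dot_const gam D _ _ 0 t u D_open smooth3_Bin smooth3_Nor
      (fun a b _ => eq_trans (dot_comm _ _) (Nor_Bin_orth a b)) H) as E.
    unfold tors. rewrite (dot_comm (Bin gam t u)) in E. lra. }
  assert (HBB : dot (Ds gam (Bin gam) t u) (Bin gam t u) = 0).
  { pose proof (Ds_dot_const gam D _ _ 1 t u D_open smooth3_Bin smooth3_Bin Bin_unit H) as E.
    rewrite (dot_comm (Bin gam t u)) in E. lra. }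
  rewrite (orthonormal_expand (Tan gam t u) (Nor gam t u) (Ds gam (Bin gam) t u))
    by (apply Tan_unit || apply Nor_unit || apply Tan_Nor_orth; auto).
  change (cross (Tan gam t u) (Nor gam t u)) with (Bin gam t u).
  rewrite HBT, HBN, HBB. vec_ring.
Qed.

Lemma Du_nu t u : D t u ->
  dot (Du (nu_th gam th) t u) (Nor gam t u) =
    - sin (th t u) * (du th t u + dot (Du (Nor gam) t u) (Bin gam t u)) /\
  dot (Du (nu_th gam th) t u) (Bin gam t u) =
    cos (th t u) * (du th t u + dot (Du (Nor gam) t u) (Bin gam t u)).
Proof.
  intros H.
  exact (Derive3_rotated_normal (fun y => Nor gam t y) (fun y => Bin gam t y) (fun y => th t y) u
    (smooth3_ex_derive3_u D _ t u smooth3_Nor H) (smooth3_ex_derive3_u D _ t u smooth3_Bin H)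
    (smooth_ex_derive_u D th t u th_smooth H)
    (locally_u_of_open D (fun a b => dot (Nor gam a b) (Nor gam a b) = 1) t u D_open
       (fun a b Hab => Nor_unit gam a b (curv_pos a b Hab)) H)
    (locally_u_of_open D (fun a b => dot (Bin gam a b) (Bin gam a b) = 1) t u D_open Bin_unit H)
    (locally_u_of_open D (fun a b => dot (Nor gam a b) (Bin gam a b) = 0) t u D_open
       (fun a b _ => Nor_Bin_orth a b) H)).
Qed.

Lemma Dt_nu t u : D t u ->
  dot (Dt (nu_th gam th) t u) (Nor gam t u) =
    - sin (th t u) * (dt th t u + dot (Dt (Nor gam) t u) (Bin gam t u)) /\
  dot (Dt (nu_th gam th) t u) (Bin gam t u) =
    cos (th t u) * (dt th t u + dot (Dt (Nor gam) t u) (Bin gam t u)).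
Proof.
  intros H.
  exact (Derive3_rotated_normal (fun y => Nor gam y u) (fun y => Bin gam y u) (fun y => th y u) t
    (smooth3_ex_derive3_t D _ t u smooth3_Nor H) (smooth3_ex_derive3_t D _ t u smooth3_Bin H)
    (smooth_ex_derive_t D th t u th_smooth H)
    (locally_t_of_open D (fun a b => dot (Nor gam a b) (Nor gam a b) = 1) t u D_open
       (fun a b Hab => Nor_unit gam a b (curv_pos a b Hab)) H)
    (locally_t_of_open D (fun a b => dot (Bin gam a b) (Bin gam a b) = 1) t u D_open Bin_unit H)
    (locally_t_of_open D (fun a b => dot (Nor gam a b) (Bin gam a b) = 0) t u D_open
       (fun a b _ => Nor_Bin_orth a b) H)).
Qed.

Lemma Ds_nu t u : D t u ->
  dot (Ds gam (nu_th gam th) t u) (Nor gam t u) = - sin (th t u) * psi3 gam th t u /\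
  dot (Ds gam (nu_th gam th) t u) (Bin gam t u) = cos (th t u) * psi3 gam th t u.
Proof.
  intros H. destruct (Du_nu t u H) as [EN EB].
  unfold psi3, tors, ds, Ds. rewrite !dot_vscall, EN, EB.
  unfold Rdiv. split; ring.
Qed.

Lemma nu_Nor t u : D t u -> dot (nu_th gam th t u) (Nor gam t u) = cos (th t u).
Proof.
  intros H. unfold nu_th.
  rewrite dot_vaddl, !dot_vscall, Nor_unit, (dot_comm (Bin gam t u)), Nor_Bin_orth by auto.
  ring.
Qed.

Lemma nu_Bin t u : D t u -> dot (nu_th gam th t u) (Bin gam t u) = sin (th t u).
Proof.
  intros H. unfold nu_th. rewrite dot_vaddl, !dot_vscall, Bin_unit, Nor_Bin_orth by auto. ring.
Qed.

Lemma nu_Tan_orth t u : D t u -> dot (nu_th gam th t u) (Tan gam t u) = 0.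
Proof.
  intros H. unfold nu_th.
  rewrite dot_vaddl, !dot_vscall, !(dot_comm _ (Tan gam t u)), Tan_Nor_orth, Tan_Bin_orth by auto.
  ring.
Qed.

Lemma nu_unit t u : D t u -> dot (nu_th gam th t u) (nu_th gam th t u) = 1.
Proof.
  intros H. unfold nu_th at 2. rewrite dot_vaddr, !dot_vscalr, nu_Nor, nu_Bin by auto.
  rewrite <- (sin2_cos2 (th t u)). unfold Rsqr. ring.
Qed.

Lemma cross_nu_Tan t u : D t u ->
  cross (nu_th gam th t u) (Tan gam t u) =
  vadd (vscal (sin (th t u)) (Nor gam t u)) (vscal (- cos (th t u)) (Bin gam t u)).
Proof. intros H. apply cross_rotated; [apply Tan_unit | apply Tan_Nor_orth]; auto. Qed.

Lemma dot_cross_nu_Tan w t u a : D t u ->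
  dot w (Nor gam t u) = - sin (th t u) * a -> dot w (Bin gam t u) = cos (th t u) * a ->
  dot w (cross (nu_th gam th t u) (Tan gam t u)) = - a.
Proof.
  intros H EN EB. rewrite cross_nu_Tan, dot_vaddr, !dot_vscalr, EN, EB by exact H.
  rewrite <- (Rmult_1_l a) at 3. rewrite <- (sin2_cos2 (th t u)). unfold Rsqr. ring.
Qed.

Lemma Dt_Tan_perp W t u : D t u -> dot W (Tan gam t u) = 0 ->
  dot (Dt (Tan gam) t u) W = dot (Ds gam (Dt gam) t u) W.
Proof.
  intros H HW.
  change (Dt (Tan gam) t u) with (Dt (fun a b => vscal (/ gspeed gam a b) (Du gam a b)) t u).
  rewrite (Dt_vscal D) by auto using smooth_inv_gspeed, smooth3_Du.
  rewrite (Dt_Du D D_open) by assumption.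
  rewrite (Du_gspeed_Ds gam gam) by (apply Rgt_not_eq, gspeed_pos, H).
  rewrite dot_vaddl, !dot_vscall. change (Ds gam gam t u) with (Tan gam t u).
  rewrite (dot_comm (Tan gam t u)), HW. unfold Ds. rewrite dot_vscall. ring.
Qed.

Lemma Dt_Nor_Bin_Ds t u : D t u ->
  dot (Dt (Nor gam) t u) (Bin gam t u) =
  / curv gam t u * dot (Ds gam (Dt (Tan gam)) t u) (Bin gam t u).
Proof.
  intros H. pose proof (gspeed_pos t u H). pose proof (curv_pos t u H).
  change (Dt (Nor gam) t u)
    with (Dt (fun a b => vscal (/ curv gam a b) (Ds gam (Tan gam) a b)) t u).
  rewrite (Dt_vscal D) by auto using smooth_inv_curv, smooth3_Ds, smooth3_Tan.
  change (Dt (Ds gam (Tan gam)) t u)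
    with (Dt (fun a b => vscal (/ gspeed gam a b) (Du (Tan gam) a b)) t u).
  rewrite (Dt_vscal D), (Dt_Du D D_open) by auto using smooth_inv_gspeed, smooth3_Du, smooth3_Tan.
  rewrite Ds_Tan, Du_Tan by (auto || lra).
  repeat (rewrite dot_vaddl || rewrite dot_vscall). rewrite Nor_Bin_orth.
  unfold Ds. rewrite dot_vscall. ring.
Qed.

Lemma Du_Du_gam t u : D t u ->
  Du (Du gam) t u = vadd (vscal (du (gspeed gam) t u) (Tan gam t u))
                         (vscal (gspeed gam t u * (gspeed gam t u * curv gam t u)) (Nor gam t u)).
Proof.
  intros H.
  rewrite (Du_ext_loc (Du gam) (fun a b => vscal (gspeed gam a b) (Tan gam a b))).
  - rewrite (Du_vscal D) by auto using smooth_gspeed, smooth3_Tan.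
    rewrite Du_Tan, vscal_vscal by exact H. reflexivity.
  - apply (locally_u_of_open D (fun a b => Du gam a b = vscal (gspeed gam a b) (Tan gam a b)));
      [exact D_open | | exact H].
    intros a b Hab. apply Du_gspeed_Ds, Rgt_not_eq, gspeed_pos, Hab.
Qed.

Lemma smooth_ds_curv : smooth_on D (ds gam (curv gam)).
Proof. exact (smooth_ds _ smooth_curv). Qed.
Lemma smooth_sin_th : smooth_on D (fun a b => sin (th a b)).
Proof. exact (smooth_sin D D_open th th_smooth). Qed.
Lemma smooth_cos_th : smooth_on D (fun a b => cos (th a b)).
Proof. exact (smooth_cos D D_open th th_smooth). Qed.

Section Flow.
Variables t0 d : R.
Hypotheses (d_pos : 0 < d) (line : forall u, D t0 u)
  (flow : forall t u, t0 <= t < t0 + d -> Dt gam t u = vscal (curv gam t u) (nu_th gam th t u)).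

Lemma flow_line u : Dt gam t0 u = vscal (curv gam t0 u) (nu_th gam th t0 u).
Proof. apply flow. lra. Qed.

Lemma Ds_Dt_gam u : Ds gam (Dt gam) t0 u =
  vadd (vscal (ds gam (curv gam) t0 u) (nu_th gam th t0 u))
       (vscal (curv gam t0 u) (Ds gam (nu_th gam th) t0 u)).
Proof.
  rewrite (Ds_ext_loc gam (Dt gam) (fun a b => vscal (curv gam a b) (nu_th gam th a b)))
    by (apply filter_forall; exact flow_line).
  exact (Ds_vscal gam D _ _ t0 u smooth_curv smooth3_nu (line u)).
Qed.

Lemma Dt_Tan_Nor u : dot (Dt (Tan gam) t0 u) (Nor gam t0 u) =
  ds gam (curv gam) t0 u * cos (th t0 u) - curv gam t0 u * sin (th t0 u) * psi3 gam th t0 u.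
Proof.
  rewrite Dt_Tan_perp by (auto || (rewrite dot_comm; auto using Tan_Nor_orth)).
  rewrite Ds_Dt_gam, dot_vaddl, !dot_vscall, nu_Nor, (proj1 (Ds_nu t0 u (line u)))
    by exact (line u).
  ring.
Qed.

Lemma Dt_Tan_Bin u : dot (Dt (Tan gam) t0 u) (Bin gam t0 u) =
  ds gam (curv gam) t0 u * sin (th t0 u) + curv gam t0 u * cos (th t0 u) * psi3 gam th t0 u.
Proof.
  rewrite Dt_Tan_perp by (auto || (rewrite dot_comm; auto using Tan_Bin_orth)).
  rewrite Ds_Dt_gam, dot_vaddl, !dot_vscall, nu_Bin, (proj2 (Ds_nu t0 u (line u)))
    by exact (line u).
  ring.
Qed.

Lemma Dt_Nor_Bin u :
  curv gam t0 u ^ 2 * dot (Dt (Nor gam) t0 u) (Bin gam t0 u) =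
  (ds gam (ds gam (curv gam)) t0 u - curv gam t0 u * psi3 gam th t0 u ^ 2) * psi2 gam th t0 u
  + (curv gam t0 u * ds gam (psi3 gam th) t0 u + 2 * ds gam (curv gam) t0 u * psi3 gam th t0 u)
    * psi1 gam th t0 u.
Proof.
  pose proof (line u) as H. pose proof (curv_pos t0 u H) as Hk.
  assert (DsTt_Bin : dot (Ds gam (Dt (Tan gam)) t0 u) (Bin gam t0 u) =
    ds gam (ds gam (curv gam)) t0 u * sin (th t0 u)
    + 2 * ds gam (curv gam) t0 u * cos (th t0 u) * psi3 gam th t0 u
    - curv gam t0 u * sin (th t0 u) * psi3 gam th t0 u ^ 2
    + curv gam t0 u * cos (th t0 u) * ds gam (psi3 gam th) t0 u).
  { pose proof (ds_ext_loc gam (fun a b => dot (Dt (Tan gam) a b) (Bin gam a b))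
      (fun a b => ds gam (curv gam) a b * sin (th a b)
                  + curv gam a b * cos (th a b) * psi3 gam th a b)
      t0 u (filter_forall _ Dt_Tan_Bin)) as Hq.
    rewrite (ds_dot gam D), Ds_Bin, dot_vscalr, Dt_Tan_Nor in Hq
      by auto using smooth3_Dt, smooth3_Tan, smooth3_Bin.
    rewrite (ds_plus gam D), !(ds_mult gam D), (ds_sin gam D), (ds_cos gam D) in Hq
      by auto using smooth_mult, smooth_ds_curv, smooth_curv, smooth_sin_th, smooth_cos_th,
                    smooth_psi3.
    replace (tors gam t0 u) with (psi3 gam th t0 u - ds gam th t0 u) in Hq by (unfold psi3; ring).
    lra. }
  rewrite Dt_Nor_Bin_Ds, DsTt_Bin by exact H. unfold psi1, psi2. field. lra.
Qed.

Lemma Dt_Dt_gam u : Dt (Dt gam) t0 u =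
  vadd (vscal (dt (curv gam) t0 u) (nu_th gam th t0 u))
       (vscal (curv gam t0 u) (Dt (nu_th gam th) t0 u)).
Proof.
  rewrite (Dt_eq_right D (Dt gam) (fun a b => vscal (curv gam a b) (nu_th gam th a b)) t0 u d)
    by (auto using smooth3_Dt, smooth3_vscal, smooth_curv, smooth3_nu).
  exact (Dt_vscal D _ _ t0 u smooth_curv smooth3_nu (line u)).
Qed.

Lemma gauss_curv_flow u : gauss_curv gam t0 u =
  - sin (th t0 u) * (dt th t0 u + dot (Dt (Nor gam) t0 u) (Bin gam t0 u)) - psi3 gam th t0 u ^ 2.
Proof.
  pose proof (line u) as H.
  pose proof (gspeed_pos t0 u H) as Hg. pose proof (curv_pos t0 u H) as Hk.
  rewrite (gauss_curv_orthogonal gam t0 u _ _ _ _ Hk Hg (nu_unit t0 u H) (Tan_unit gam t0 u Hg)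
    (nu_Tan_orth t0 u H) (flow_line u) (Du_gspeed_Ds gam gam t0 u (Rgt_not_eq _ _ Hg))).
  rewrite Dt_Dt_gam, Du_Du_gam, (Du_gspeed_Ds gam (Dt gam)), Ds_Dt_gam by (exact H || lra).
  repeat (rewrite dot_vaddl || rewrite dot_vscall).
  rewrite (dot_cross_nu_Tan _ t0 u _ H (proj1 (Dt_nu t0 u H)) (proj2 (Dt_nu t0 u H))).
  rewrite (dot_cross_nu_Tan _ t0 u _ H (proj1 (Ds_nu t0 u H)) (proj2 (Ds_nu t0 u H))).
  rewrite dot_cross_l, dot_cross_r, (cross_nu_Tan t0 u H), dot_vaddr, !dot_vscalr.
  rewrite Nor_unit, Nor_Bin_orth by lra.
  field. lra.
Qed.
End Flow.
End Frame.
End Tangent.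

Lemma continuous_vnorm D X t u : open_2d D -> smooth_on3 D X -> D t u ->
  continuity_2d_pt (fun a b => vnorm (X a b)) t u.
Proof.
  intros HD HX H. apply continuity_1d_2d_pt_comp.
  - apply continuity_pt_sqrt. unfold dot. nra.
  - exact (smooth_continuous D _ t u (smooth_dot D HD _ _ HX HX) H).
Qed.

(* Regularity is only assumed for [t >= 0]; the frame is smooth on this open neighbourhood. *)
Definition regular_part (S : R -> R -> Prop) (gam : R -> R -> V3) (t u : R) : Prop :=
  S t u /\ 0 < gspeed gam t u /\ 0 < curv gam t u.

Lemma open_regular_part S gam : open_2d S -> smooth_on3 S gam -> open_2d (regular_part S gam).
Proof.
  intros HS Hgam.
  set (S1 := fun t u => S t u /\ 0 < gspeed gam t u).
  assert (HS1g : forall t u, S1 t u -> 0 < gspeed gam t u) by (intros ? ? []; assumption).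
  assert (HS1 : open_2d S1).
  { apply open_2d_pos; [exact HS|]. intros t u H.
    exact (continuous_vnorm S _ t u HS (smooth3_Du S gam Hgam) H). }
  assert (Hgam1 : smooth_on3 S1 gam) by (apply (smooth3_subset S); [intros ? ? []|]; assumption).
  assert (HU : open_2d (fun t u => S1 t u /\ 0 < curv gam t u)).
  { apply open_2d_pos; [exact HS1|]. intros t u H.
    refine (continuous_vnorm S1 _ t u HS1 _ H).
    exact (smooth3_Ds gam S1 HS1 Hgam1 HS1g _ (smooth3_Tan gam S1 HS1 Hgam1 HS1g)). }
  intros t u [Ht [Hg Hk]].
  apply locally_2d_impl with (fun a b => S1 a b /\ 0 < curv gam a b).
  - apply locally_2d_forall. intros a b [[Ha Hga] Hka]. repeat split; assumption.
  - apply HU. repeat split; assumption.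
Qed.

Lemma upsilon_spec gam th K t u X : 0 < curv gam t u -> psi2 gam th t u <> 0 ->
  curv gam t u ^ 2 * X =
    (ds gam (ds gam (curv gam)) t u - curv gam t u * psi3 gam th t u ^ 2) * psi2 gam th t u
    + (curv gam t u * ds gam (psi3 gam th) t u + 2 * ds gam (curv gam) t u * psi3 gam th t u)
      * psi1 gam th t u ->
  - sin (th t u) * (upsilon gam th K t u + X) - psi3 gam th t u ^ 2 = K.
Proof.
  intros Hk Hpsi2 HX.
  assert (Hs : sin (th t u) <> 0) by (intro E; apply Hpsi2; unfold psi2; rewrite E; ring).
  apply (Rmult_eq_compat_l (/ curv gam t u ^ 2)) in HX.
  rewrite <- Rmult_assoc, Rinv_l, Rmult_1_l in HX by (apply pow_nonzero; lra).
  rewrite HX. unfold upsilon, psi1, psi2. field. lra.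
Qed.

Theorem mainTheorem18 (K tbar : R) (gam : R -> R -> V3) (th : R -> R -> R) :
  0 < tbar ->
  (* smoothness on an open strip (a, tbar) x R containing [0, tbar) x R *)
  (exists a, a < 0 /\
     smooth_on3 (fun t _ => a < t < tbar) gam /\
     smooth_on (fun t _ => a < t < tbar) th) ->
  (* closed curves parametrized over S^1 = R / 2 pi Z; theta an angle function *)
  (forall t u, 0 <= t < tbar -> gam t (u + 2 * PI) = gam t u) ->
  (forall t u, 0 <= t < tbar ->
     cos (th t (u + 2 * PI)) = cos (th t u) /\ sin (th t (u + 2 * PI)) = sin (th t u)) ->
  (* regularity: g > 0, kappa > 0, psi_2 <> 0 *)
  (forall t u, 0 <= t < tbar ->
     0 < gspeed gam t u /\ 0 < curv gam t u /\ psi2 gam th t u <> 0) ->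
  (* framed curvature flow *)
  (forall t u, 0 <= t < tbar ->
     Dt gam t u = vscal (curv gam t u) (nu_th gam th t u) /\
     dt th t u = upsilon gam th K t u) ->
  (* the trajectory surface has constant Gaussian curvature K *)
  forall t u, 0 <= t < tbar -> gauss_curv gam t u = K.
Proof.
  intros _ [a [Ha [Hgam Hth]]] _ _ Hreg Hflow t0 u Ht0.
  set (U := regular_part (fun t _ => a < t < tbar) gam).
  assert (HU : open_2d U) by (apply open_regular_part; [apply open_2d_strip | exact Hgam]).
  assert (HUS : forall t v, U t v -> a < t < tbar) by (intros ? ? []; assumption).
  assert (Hline : forall v, U t0 v).
  { intro v. destruct (Hreg t0 v Ht0) as [Hg [Hk _]]. repeat split; lra || assumption. }
  assert (Hflow_right : forall t v, t0 <= t < t0 + (tbar - t0) ->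
    Dt gam t v = vscal (curv gam t v) (nu_th gam th t v)) by (intros t v Ht; apply Hflow; lra).
  pose (Uspeed := fun t v (H : U t v) => proj1 (proj2 H)).
  pose (Ucurv := fun t v (H : U t v) => proj2 (proj2 H)).
  pose proof (smooth3_subset _ U gam HUS Hgam) as HgamU.
  pose proof (smooth_subset _ U th HUS Hth) as HthU.
  rewrite (gauss_curv_flow gam U HU HgamU Uspeed th HthU Ucurv t0 (tbar - t0) ltac:(lra)
             Hline Hflow_right u).
  rewrite (proj2 (Hflow t0 u Ht0)).
  apply upsilon_spec; [apply Ucurv, Hline | apply (Hreg t0 u Ht0) |].
  exact (Dt_Nor_Bin gam U HU HgamU Uspeed th HthU Ucurv t0 (tbar - t0) ltac:(lra)
           Hline Hflow_right u).
Qed.
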